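(* If $T_{1}$ has a left $A$-colinear inverse, then for all $a,b,c\in A$, $$m\Big((\iota\otimes S)\big((c\otimes 1)\Delta(a)\big)(1\otimes b)\Big)=c\,\varepsilon(a)\,b .$$
   Context: Let $A$ be an associative algebra over a field $k$ (possibly without identity) whose product is non-degenerate, with multiplier algebra $M(A)$, left multipliers $L(A)$, and multiplication map $m$. Let $\Delta: A\to M(A\otimes A)$ be an algebra homomorphism (not necessarily coassociative) such that the Galois maps $T_{1}(a\otimes b)=\Delta(a)(1\otimes b)$ and $T_{2}(a\otimes b)=(a\otimes 1)\Delta(b)$ lie in $A\otimes A$ for all $a,b\in A$. Let $\varepsilon:A\to k$ be linear with $(\varepsilon\otimes\iota)T_{1}(a\otimes b)=ab=(\iota\otimes\varepsilon)T_{2}(a\otimes b)$. Assume $T_{1},T_{2}$ are bijective. Sweedler notation $\Delta(a)=a_{(1)}\otimes a_{(2)}$ is used. ''$T_{1}$ has a left $A$-colinear inverse'' means $T_{1}^{-1}=(\iota\otimes\varepsilon\otimes\iota)(\iota\otimes T_{1}^{-1})(\Delta\otimes\iota)$. The map $S:A\to L(A)$ is defined by $S(a)b=(\varepsilon\otimes\iota)T_{1}^{-1}(a\otimes b)$. *)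

From HB Require Import structures.
From mathcomp Require Import all_boot all_order all_algebra.
Set Implicit Arguments. Unset Strict Implicit. Unset Printing Implicit Defensive.
Import GRing.Theory.
Local Open Scope ring_scope.

Section Defs.
Variable k : fieldType.

Definition is_linear (U V : lmodType k) (f : U -> V) : Prop :=
  forall (al : k) (x y : U), f (al *: x + y) = al *: f x + f y.

Definition is_functional (U : lmodType k) (f : U -> k) : Prop :=
  forall (al : k) (x y : U), f (al *: x + y) = al * f x + f y.

Definition is_bilinear (U V W : lmodType k) (f : U -> V -> W) : Prop :=
  (forall u, is_linear (f u)) /\ (forall v, is_linear (fun u => f u v)).

Definition is_tensor_product (U V T : lmodType k) (t : U -> V -> T) : Prop :=
  is_bilinear t /\
  forall (W : lmodType k) (f : U -> V -> W), is_bilinear f ->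
    exists! g : T -> W, is_linear g /\ forall u v, g (t u v) = f u v.

Definition nondeg_assoc_algebra (A : lmodType k) (mulA : A -> A -> A) : Prop :=
  is_bilinear mulA /\
  (forall a b c, mulA a (mulA b c) = mulA (mulA a b) c) /\
  (forall a, (forall b, mulA a b = 0) -> a = 0) /\
  (forall a, (forall b, mulA b a = 0) -> a = 0).

(* (l, r) is a multiplier of the algebra (B, mulB):
   l x = m x (left action), r x = x m (right action), x (m y) = (x m) y *)
Definition is_multiplier (B : lmodType k) (mulB : B -> B -> B)
  (l r : B -> B) : Prop :=
  is_linear l /\ is_linear r /\ forall x y, mulB x (l y) = mulB (r x) y.
End Defs.

From HB Require Import structures.
From mathcomp Require Import all_boot all_order all_algebra.
Import GRing.Theory.
Local Open Scope ring_scope.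

(* By colinearity the left-hand side is [m ((c (x) 1) T1^-1 (a (x) b))]
   = [c m (T1^-1 (a (x) b))].  The counit property says that [m] and
   [(eps (x) id) o T1] agree on pure tensors, hence everywhere, so
   [m (T1^-1 (a (x) b)) = (eps (x) id) (a (x) b) = eps a b]. *)

Section LinearMaps.
Context {k : fieldType} {U V W : lmodType k}.

Lemma is_linear0 (f : U -> V) : is_linear f -> f 0 = 0.
Proof.
move=> f_lin; have f0_double := f_lin 1 0 0.
rewrite !scale1r addr0 in f0_double.
by apply: (@addrI _ (f 0)); rewrite addr0 -f0_double.
Qed.

Lemma is_linearZ (f : U -> V) : is_linear f -> forall al x, f (al *: x) = al *: f x.
Proof. by move=> f_lin al x; rewrite -[al *: x]addr0 f_lin is_linear0 // addr0. Qed.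

Lemma is_linear_comp (g : V -> W) (f : U -> V) :
  is_linear g -> is_linear f -> is_linear (g \o f).
Proof. by move=> g_lin f_lin al x y /=; rewrite f_lin g_lin. Qed.

End LinearMaps.

Lemma tensor_linear_ext {k : fieldType} {U V T W : lmodType k} {t : U -> V -> T}
    {f : U -> V -> W} {g1 g2 : T -> W} :
  is_tensor_product t -> is_bilinear f -> is_linear g1 -> is_linear g2 ->
  (forall u v, g1 (t u v) = f u v) -> (forall u v, g2 (t u v) = f u v) ->
  g1 =1 g2.
Proof.
move=> [_ t_univ] f_bil g1_lin g2_lin g1_t g2_t x.
have [g [_ g_uniq]] := t_univ W f f_bil.
by rewrite -(g_uniq g1) ?(g_uniq g2).
Qed.

Section MultiplicationMap.
Context {k : fieldType} {A : lmodType k} {mulA : A -> A -> A}.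
Context (mulA_bil : is_bilinear mulA).
Context (mulA_assoc : forall a b c, mulA a (mulA b c) = mulA (mulA a b) c).
Context {AA : lmodType k} {tens : A -> A -> AA} (tens_univ : is_tensor_product tens).
Context {tmap : (A -> A) -> (A -> A) -> AA -> AA}.
Context (tmap_tens : forall f g : A -> A, is_linear f -> is_linear g ->
  is_linear (tmap f g) /\ forall x y, tmap f g (tens x y) = tens (f x) (g y)).
Context {m : AA -> A} (m_lin : is_linear m) (m_tens : forall x y, m (tens x y) = mulA x y).

Lemma mult_map_tmap_mull (c : A) (x : AA) : m (tmap (mulA c) id x) = mulA c (m x).
Proof.
have [mulA_linl mulA_linr] := mulA_bil.
have [tmap_lin tmap_t] := @tmap_tens (mulA c) id (mulA_linl c) (fun al x y => erefl).
apply: (@tensor_linear_ext _ _ _ _ _ _ (fun u v => mulA c (mulA u v))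
  (m \o tmap (mulA c) id) (mulA c \o m) tens_univ).
- split=> [u|v] al y z /=.
  + by rewrite mulA_linl mulA_linl.
  + by rewrite mulA_linr mulA_linl.
- exact: is_linear_comp.
- exact: is_linear_comp.
- by move=> u v /=; rewrite tmap_t m_tens mulA_assoc.
- by move=> u v /=; rewrite m_tens.
Qed.

Lemma mult_map_unique (g : AA -> A) :
  is_linear g -> (forall x y, g (tens x y) = mulA x y) -> m =1 g.
Proof. by move=> g_lin g_t; exact: (tensor_linear_ext tens_univ mulA_bil). Qed.

End MultiplicationMap.

Theorem lemma3p1
  (k : fieldType)
  (* the algebra A *)
  (A : lmodType k) (mulA : A -> A -> A)
  (HA : nondeg_assoc_algebra mulA)
  (* the tensor product A (x) A, its algebra product, and tensor products of maps *)
  (AA : lmodType k) (tens : A -> A -> AA)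
  (Htens : is_tensor_product tens)
  (mulT : AA -> AA -> AA)
  (HmulT : is_bilinear mulT /\
           forall a b c d, mulT (tens a b) (tens c d) = tens (mulA a c) (mulA b d))
  (tmap : (A -> A) -> (A -> A) -> AA -> AA)
  (Htmap : forall f g : A -> A, is_linear f -> is_linear g ->
             is_linear (tmap f g) /\
             forall x y, tmap f g (tens x y) = tens (f x) (g y))
  (* the multiplication map m : A (x) A -> A *)
  (m : AA -> A)
  (Hm : is_linear m /\ forall x y, m (tens x y) = mulA x y)
  (* Delta : A -> M(A (x) A); Delta(a) = (DL a, DR a) as a multiplier *)
  (DL DR : A -> AA -> AA)
  (HDmult : forall a, is_multiplier mulT (DL a) (DR a))
  (HDlin : forall (al : k) (a b : A) (x : AA),
             DL (al *: a + b) x = al *: DL a x + DL b x /\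
             DR (al *: a + b) x = al *: DR a x + DR b x)
  (HDhom : forall (a b : A) (x : AA),
             DL (mulA a b) x = DL a (DL b x) /\
             DR (mulA a b) x = DR b (DR a x))
  (* Galois maps: T1(a (x) b) = Delta(a)(1 (x) b), T2(a (x) b) = (a (x) 1)Delta(b),
     equalities of multipliers of A (x) A *)
  (T1 T2 : AA -> AA)
  (HT1lin : is_linear T1) (HT2lin : is_linear T2)
  (HT1 : forall a b x,
     mulT (T1 (tens a b)) x = DL a (tmap id (mulA b) x) /\
     mulT x (T1 (tens a b)) = tmap id (fun y => mulA y b) (DR a x))
  (HT2 : forall a b x,
     mulT (T2 (tens a b)) x = tmap (mulA a) id (DL b x) /\
     mulT x (T2 (tens a b)) = DR b (tmap (fun y => mulA y a) id x))
  (* the counit-like map epsilon *)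
  (eps : A -> k) (Heps : is_functional eps)
  (eps_id id_eps : AA -> A)
  (Heps_id : is_linear eps_id /\ forall x y, eps_id (tens x y) = eps x *: y)
  (Hid_eps : is_linear id_eps /\ forall x y, id_eps (tens x y) = eps y *: x)
  (HepsT : forall a b, eps_id (T1 (tens a b)) = mulA a b /\
                       id_eps (T2 (tens a b)) = mulA a b)
  (* T1 and T2 bijective *)
  (T1inv : AA -> AA) (HT1inv : cancel T1 T1inv /\ cancel T1inv T1)
  (HT2bij : bijective T2)
  (* S(a)b := (eps (x) id) T1^{-1}(a (x) b) *)
  (S : A -> A -> A) (HS : forall a b, S a b = eps_id (T1inv (tens a b)))
  (* T1 has a left A-colinear inverse: T1^{-1} = (id(x)eps(x)id)(id(x)T1^{-1})(Delta(x)id),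
     read after covering the first leg by c (x) 1 *)
  (Hcolin : forall a b c : A,
     tmap (mulA c) id (T1inv (tens a b)) =
     tmap id (fun y => S y b) (T2 (tens c a))) :
  forall a b c : A,
    m (tmap id (fun y => S y b) (T2 (tens c a))) = eps a *: mulA c b.
Proof.
move=> a b c.
have [mulA_bil [mulA_assoc _]] := HA.
have [m_lin m_tens] := Hm.
have [eps_id_lin eps_id_tens] := Heps_id.
have m_counitT1 : m =1 eps_id \o T1.
  apply: (mult_map_unique mulA_bil Htens m_lin m_tens).
    exact: is_linear_comp.
  by move=> x y; rewrite /= (proj1 (HepsT x y)).
rewrite -Hcolin (mult_map_tmap_mull mulA_bil mulA_assoc Htens Htmap m_lin m_tens).
rewrite m_counitT1 /= (proj2 HT1inv) eps_id_tens.
exact: is_linearZ (proj1 mulA_bil c) _ _.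
Qed.
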